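(* Let $\mathbb{F}=\mathbb{H}$, $G=\mathrm{SL}(3,\mathbb{H})$, and let $\epsilon<\tfrac16$. Then the integral $$\int_{\mathbb{H}}\int_{\mathbb{H}}\Phi(n_{y,z})^{-1-\epsilon}\,dy\,dz$$ is divergent.
   Context: $\theta(g)=(g^{-1})^\dagger$ (quaternionic conjugate transpose), $J=\mathrm{diag}(1,-1,-1)$, $\sigma(g)=J\theta(g)J$, $\Phi(g)=\|g\sigma(g)^{-1}\|_{HS}^2\|\sigma(g)g^{-1}\|_{HS}^2$ with $\|X\|_{HS}^2=\sum_{i,j}|X_{ij}|^2$. For $y,z\in\mathbb{H}$, $n_{y,z}=\begin{pmatrix}1&0&z\\0&1&y\\0&0&1\end{pmatrix}$. $dy,dz$ denote Lebesgue measure on $\mathbb{H}\cong\mathbb{R}^4$. *)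

From HB Require Import structures.
From mathcomp Require Import all_boot all_order all_algebra.
From mathcomp Require Import all_classical all_reals all_analysis.
From Stdlib Require Import ClassicalEpsilon.
Set Implicit Arguments. Unset Strict Implicit. Unset Printing Implicit Defensive.
Import Order.TTheory GRing.Theory Num.Theory.
Local Open Scope ring_scope.

Section Quat.
Variable R : realType.

(* Quaternions H = R^4 : q = q0 + q1 i + q2 j + q3 k *)
Record quat := Quat { q0 : R; q1 : R; q2 : R; q3 : R }.

Definition qzero : quat := Quat 0 0 0 0.
Definition qone : quat := Quat 1 0 0 0.
Definition qadd (p q : quat) : quat :=
  Quat (q0 p + q0 q) (q1 p + q1 q) (q2 p + q2 q) (q3 p + q3 q).
Definition qopp (p : quat) : quat := Quat (- q0 p) (- q1 p) (- q2 p) (- q3 p).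
Definition qmul (p q : quat) : quat :=
  Quat (q0 p * q0 q - q1 p * q1 q - q2 p * q2 q - q3 p * q3 q)
       (q0 p * q1 q + q1 p * q0 q + q2 p * q3 q - q3 p * q2 q)
       (q0 p * q2 q - q1 p * q3 q + q2 p * q0 q + q3 p * q1 q)
       (q0 p * q3 q + q1 p * q2 q - q2 p * q1 q + q3 p * q0 q).
Definition qconj (p : quat) : quat := Quat (q0 p) (- q1 p) (- q2 p) (- q3 p).
Definition qnorm2 (p : quat) : R := q0 p ^+ 2 + q1 p ^+ 2 + q2 p ^+ 2 + q3 p ^+ 2.

Definition qmat := 'I_3 -> 'I_3 -> quat.

Definition mmul (A B : qmat) : qmat :=
  fun i j => \big[qadd/qzero]_(k < 3) qmul (A i k) (B k j).
Definition mid : qmat := fun i j => if i == j then qone else qzero.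
(* the inverse matrix (two-sided); arbitrary if g is not invertible *)
Definition minv (g : qmat) : qmat :=
  epsilon (inhabits g) (fun h => mmul g h = mid /\ mmul h g = mid).
Definition mdag (A : qmat) : qmat := fun i j => qconj (A j i).
Definition Jm : qmat :=
  fun i j => if i == j then (if i == ord0 then qone else qopp qone) else qzero.

Definition theta (g : qmat) : qmat := mdag (minv g).
Definition sigma (g : qmat) : qmat := mmul Jm (mmul (theta g) Jm).
Definition hs2 (X : qmat) : R := \sum_(i < 3) \sum_(j < 3) qnorm2 (X i j).
Definition Phi (g : qmat) : R :=
  hs2 (mmul g (minv (sigma g))) * hs2 (mmul (sigma g) (minv g)).

(* n_{y,z} = [[1,0,z],[0,1,y],[0,0,1]] *)
Definition nyz (y z : quat) : qmat :=
  fun i j =>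
    if i == j then qone
    else if (val i == 0%N) && (val j == 2%N) then z
    else if (val i == 1%N) && (val j == 2%N) then y
    else qzero.

(* Lebesgue integral over H = R^4 of a nonnegative function, written as an
   iterated integral over the four real coordinates (equal to the integral
   against Lebesgue measure on R^4 by Tonelli for nonnegative measurable f). *)
Definition Hint (f : quat -> \bar R) : \bar R :=
  (\int[@lebesgue_measure R]_a \int[@lebesgue_measure R]_b
     \int[@lebesgue_measure R]_c \int[@lebesgue_measure R]_d f (Quat a b c d))%E.

End Quat.

(* Phi(n_{y,z}) depends only on a = |z|^2 and b = |y|^2, and equals
   ((a + b)^2 + 4b + 3) ((b - a + 1)^2 + 2a + 2b + 2).  Near the cone |y| = |z|
   the second factor is small: if r <= z_i <= 2r for all four coordinates of z
   (a region of volume r^4) and |z|^2 <= |y|^2 <= |z|^2 + r, which contains a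
   region of volume r^3 / 10 in y, then Phi <= C r^6.  Hence the integral is at
   least C' r^7 (r^6)^(-1-eps) = C' r^(1 - 6 eps), which is unbounded as
   r -> oo exactly when eps < 1/6.  When eps < 0 the exponent -1 - eps is first
   lowered to -1, which only decreases the integrand since Phi >= 1. *)

From HB Require Import structures.
From mathcomp Require Import all_boot all_order all_algebra.
From mathcomp Require Import all_classical all_reals all_analysis.
From mathcomp Require Import ring lra.
From Stdlib Require Import ClassicalEpsilon.
Set Implicit Arguments. Unset Strict Implicit. Unset Printing Implicit Defensive.
Import Order.TTheory GRing.Theory Num.Theory.
Local Open Scope ring_scope.

Definition Phi_radial (R : pzRingType) (a b : R) : R :=
  ((a + b) ^+ 2 + 4 * b + 3) * ((1 - a + b) ^+ 2 + 2 * a + 2 * b + 2).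

Section QuaternionMatrices.
Variable R : realType.
Local Notation quat := (quat R).
Local Notation qmat := (qmat R).
Local Notation "1q" := (qone R).
Local Notation "0q" := (qzero R).

Lemma quat_ext (p q : quat) :
  q0 p = q0 q -> q1 p = q1 q -> q2 p = q2 q -> q3 p = q3 q -> p = q.
Proof. by case: p; case: q => /= ? ? ? ? ? ? ? ? -> -> -> ->. Qed.

Ltac quat_ring := apply: quat_ext; cbn [q0 q1 q2 q3 qadd qmul qopp qconj qzero qone]; ring.

Definition o0 : 'I_3 := @Ordinal 3 0 isT.
Definition o1 : 'I_3 := @Ordinal 3 1 isT.
Definition o2 : 'I_3 := @Ordinal 3 2 isT.

Lemma ord3_ind (P : 'I_3 -> Prop) : P o0 -> P o1 -> P o2 -> forall i, P i.
Proof. by move=> ? ? ? [[|[|[|//]]] i_lt3]; rewrite (bool_irrelevance i_lt3 isT). Qed.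

Lemma index_enum_ord3 : index_enum 'I_3 = [:: o0; o1; o2].
Proof.
by have := val_enum_ord 3; rewrite enumT => enum3; apply: (inj_map val_inj); rewrite enum3.
Qed.

Lemma mmulE (A B : qmat) i j : mmul A B i j =
  qadd (qmul (A i o0) (B o0 j))
    (qadd (qmul (A i o1) (B o1 j)) (qadd (qmul (A i o2) (B o2 j)) 0q)).
Proof. by rewrite /mmul index_enum_ord3 !big_cons big_nil. Qed.

Ltac mx_ext := apply/funext; apply: ord3_ind; apply/funext; apply: ord3_ind.

Lemma mmulA (A B C : qmat) : mmul A (mmul B C) = mmul (mmul A B) C.
Proof. by mx_ext; rewrite !mmulE; quat_ring. Qed.

Lemma mmulm1 (A : qmat) : mmul A (mid R) = A.
Proof. by mx_ext; rewrite !mmulE /mid /=; quat_ring. Qed.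

Lemma mmul1m (A : qmat) : mmul (mid R) A = A.
Proof. by mx_ext; rewrite !mmulE /mid /=; quat_ring. Qed.

Lemma minv_eq (g h : qmat) : mmul g h = mid R -> mmul h g = mid R -> minv g = h.
Proof.
move=> gh hg; rewrite /minv.
have [_] := epsilon_spec (inhabits g)
  (fun h => mmul g h = mid R /\ mmul h g = mid R) (ex_intro _ h (conj gh hg)).
set h' := epsilon _ _ => h'g.
by rewrite -[h']mmulm1 -gh mmulA h'g mmul1m.
Qed.

Definition mx3 (a b c d e f g h k : quat) : qmat :=
  fun i j => nth 0q (nth [::] [:: [:: a; b; c]; [:: d; e; f]; [:: g; h; k]] i) j.

Ltac mx_red := rewrite ?mmulE; rewrite /mdag; cbn [mx3 nth nat_of_ord o0 o1 o2].

Lemma nyzE y z : nyz y z = mx3 1q 0q z 0q 1q y 0q 0q 1q.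
Proof. by mx_ext. Qed.

Lemma midE : mid R = mx3 1q 0q 0q 0q 1q 0q 0q 0q 1q.
Proof. by mx_ext. Qed.

Lemma JmE : Jm R = mx3 1q 0q 0q 0q (qopp 1q) 0q 0q 0q (qopp 1q).
Proof. by mx_ext. Qed.

Lemma Phi_nyzE (y z : quat) : Phi (nyz y z) = Phi_radial (qnorm2 z) (qnorm2 y).
Proof.
have n_inv : minv (nyz y z) = mx3 1q 0q (qopp z) 0q 1q (qopp y) 0q 0q 1q.
  by apply: minv_eq; rewrite nyzE midE; mx_ext; mx_red; quat_ring.
have sigma_n : sigma (nyz y z) = mx3 1q 0q 0q 0q 1q 0q (qconj z) (qopp (qconj y)) 1q.
  by rewrite /sigma /theta n_inv JmE; mx_ext; mx_red; quat_ring.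
have sigma_n_inv :
    minv (sigma (nyz y z)) = mx3 1q 0q 0q 0q 1q 0q (qopp (qconj z)) (qconj y) 1q.
  by apply: minv_eq; rewrite sigma_n midE; mx_ext; mx_red; quat_ring.
rewrite /Phi sigma_n_inv sigma_n n_inv nyzE /hs2 index_enum_ord3 !big_cons !big_nil.
mx_red; rewrite /qnorm2 /Phi_radial; cbn [q0 q1 q2 q3 qadd qmul qopp qconj qzero qone].
ring.
Qed.

End QuaternionMatrices.

Section PhiRadialBounds.
Variable R : realFieldType.

Lemma Phi_radial_ge1 (a b : R) : 0 <= a -> 0 <= b -> 1 <= Phi_radial a b.
Proof.
move=> a0 b0; rewrite /Phi_radial.
have := sqr_ge0 (a + b); have := sqr_ge0 (1 - a + b); nra.
Qed.

Lemma Phi_radial_le (r a b : R) : 1 <= r -> 0 <= a <= 16 * r ^+ 2 -> a <= b <= a + r ->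
  Phi_radial a b <= 10 ^+ 5 * r ^+ 6.
Proof.
move=> r1 /andP[a0 a_le] /andP[ab b_le].
set X := (a + b) ^+ 2 + 4 * b + 3; set Y := (1 - a + b) ^+ 2 + 2 * a + 2 * b + 2.
have r2_ge : 1 <= r ^+ 2 by rewrite expr_ge1 // (le_trans ler01).
have r4E : r ^+ 4 = r ^+ 2 * r ^+ 2 by rewrite -exprD.
have r6E : r ^+ 6 = r ^+ 4 * r ^+ 2 by rewrite -exprD.
have X_le : X <= 1160 * r ^+ 4.
  have : a + b <= 33 * r ^+ 2 by nra.
  rewrite /X r4E; have := sqr_ge0 (a + b); nra.
have Y_le : Y <= 72 * r ^+ 2 by rewrite /Y; nra.
have X0 : 0 <= X by rewrite /X; have := sqr_ge0 (a + b); nra.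
have Y0 : 0 <= Y by rewrite /Y; have := sqr_ge0 (1 - a + b); nra.
have r4_ge0 : 0 <= r ^+ 4 by rewrite r4E; nra.
rewrite /Phi_radial -/X -/Y r6E; nra.
Qed.

End PhiRadialBounds.

Lemma sqrt_sub_shift_bounds (R : rcfType) (r a S t : R) : 1 <= r ->
  0 <= S <= a -> a <= 16 * r ^+ 2 ->
  Num.sqrt (a - S) <= t <= Num.sqrt (a - S) + 1 / 10 -> a <= S + t ^+ 2 <= a + r.
Proof.
move=> r1 /andP[S0 Sa] a_le /andP[st ts].
have s0 : 0 <= Num.sqrt (a - S) by rewrite sqrtr_ge0.
have sE : Num.sqrt (a - S) ^+ 2 = a - S by rewrite sqr_sqrtr // subr_ge0.
have s_le : Num.sqrt (a - S) <= 4 * r by nra.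
apply/andP; split; nra.
Qed.

Section Powers.
Variable R : realType.

Lemma le0_ger_powR (p x y : R) : p <= 0 -> 0 < x <= y -> y `^ p <= x `^ p.
Proof.
move=> p_le0 /andP[x0 xy]; have y0 : 0 < y := lt_le_trans x0 xy.
rewrite -(opprK p) (powRN y) (powRN x) lef_pV2 ?posrE ?powR_gt0 //.
by apply: ge0_ler_powR; rewrite ?nnegrE ?oppr_ge0 // ltW.
Qed.

Lemma powR_unbounded (K d M : R) : 0 < K -> 0 < d -> exists2 r, 1 <= r & M <= K * r `^ d.
Proof.
move=> K0 d0; pose X := `|M| / K.
have X0 : 0 <= X by rewrite divr_ge0 // ltW.
pose r := Num.max 1 (X `^ d^-1).
have r1 : 1 <= r by rewrite /r le_max lexx.
exists r => //; have X_le : X <= r `^ d.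
  rewrite -[X in X <= _](powRr1 X0) -(mulVf (lt0r_neq0 d0)) powRrM.
  apply: ge0_ler_powR; rewrite ?nnegrE ?powR_ge0 ?(ltW d0) ?(le_trans ler01 r1) //.
  by rewrite /r le_max lexx orbT.
apply: le_trans (ler_norm M) _.
by rewrite -(divfK (lt0r_neq0 K0) `|M|) -/X mulrC ler_pM2l.
Qed.

End Powers.

Section Integrals.
Local Open Scope classical_set_scope.
Local Open Scope ereal_scope.

Lemma ge0_le_integralT d (T : measurableType d) (R : realType)
    (mu : {measure set T -> \bar R}) (f g : T -> \bar R) :
  (forall x, 0 <= f x) -> (forall x, f x <= g x) ->
  \int[mu]_x f x <= \int[mu]_x g x.
Proof.
move=> f0 fg; have g0 x : 0 <= g x by exact: le_trans (f0 x) (fg x).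
rewrite !ge0_integralTE //; apply: ereal_sup_le => _ [h hf <-].
by exists h => // x; exact: le_trans (hf x) (fg x).
Qed.

Variable R : realType.
Local Notation leb := (@lebesgue_measure R).

Lemma integral_ge_itv (g : R -> \bar R) (lo w c : R) :
  (forall x, 0 <= g x) -> (0 <= w)%R -> (0 <= c)%R ->
  (forall x, (lo <= x <= lo + w)%R -> c%:E <= g x) ->
  (w * c)%:E <= \int[leb]_x g x.
Proof.
move=> g0 w0 c0 gc; pose D : set R := [set` `[lo, lo + w]%R].
have mD : measurable D by exact: measurable_itv.
have -> : (w * c)%:E = \int[leb]_(x in D) (cst c%:E) x.
  have := @lebesgue_measure_itv R `[lo, lo + w]%R.
  rewrite /= lte_fin ltrDl -EFinD addrAC subrr add0r => leb_D.
  (* [integral_cst] states the measure of [D] through a canonical instance of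
     [leb], so [leb_D] only matches up to conversion. *)
  rewrite integral_cst // (_ : _ D = (if (0 < w)%R then w%:E else 0)); last exact: leb_D.
  case: ltgtP w0 => // [_ _|<- _]; last by rewrite mul0r mule0.
  by rewrite -EFinM mulrC.
rewrite integral_mkcond; apply: ge0_le_integralT => x; rewrite /patch.
  by case: ifP => // _; rewrite lee_fin.
by case: ifPn => // /set_mem; rewrite /D /= in_itv /=; exact: gc.
Qed.

Lemma Hint_ge0 (f : quat R -> \bar R) : (forall q, 0 <= f q) -> 0 <= Hint f.
Proof. by move=> f0; do 4 apply: integral_ge0 => ? _. Qed.

Lemma Hint_ge_box (f : quat R -> \bar R) (l0 l1 l2 : R) (l3 : R -> R -> R -> R)
    (w0 w1 w2 w3 c : R) :
  (forall q, 0 <= f q) -> (0 <= w0)%R -> (0 <= w1)%R -> (0 <= w2)%R -> (0 <= w3)%R ->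
  (0 <= c)%R ->
  (forall a b e d, (l0 <= a <= l0 + w0)%R -> (l1 <= b <= l1 + w1)%R ->
     (l2 <= e <= l2 + w2)%R -> (l3 a b e <= d <= l3 a b e + w3)%R ->
     c%:E <= f (Quat a b e d)) ->
  (w0 * w1 * w2 * w3 * c)%:E <= Hint f.
Proof.
move=> f0 w0_ge0 w1_ge0 w2_ge0 w3_ge0 c0 fc; rewrite /Hint -!mulrA.
apply: (integral_ge_itv (lo := l0)) => [a|||a Ha]; rewrite ?mulr_ge0 //.
  by do 3 apply: integral_ge0 => ? _.
apply: (integral_ge_itv (lo := l1)) => [b|||b Hb]; rewrite ?mulr_ge0 //.
  by do 2 apply: integral_ge0 => ? _.
apply: (integral_ge_itv (lo := l2)) => [e|||e He]; rewrite ?mulr_ge0 //.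
  by apply: integral_ge0 => ? _.
by apply: (integral_ge_itv (lo := l3 a b e)) => // d Hd; exact: fc.
Qed.

End Integrals.

Section Divergence.
Variable R : realType.

Lemma Phi_radial_powR_ge (p q r a b : R) : p <= 0 -> p <= q -> 1 <= r ->
  0 <= a <= 16 * r ^+ 2 -> a <= b <= a + r ->
  (10 ^+ 5 * r ^+ 6) `^ p <= Phi_radial a b `^ q.
Proof.
move=> p_le0 pq r1 /andP[a0 a_le] /andP[ab b_le].
have Phi_ge1 : 1 <= Phi_radial a b := Phi_radial_ge1 a0 (le_trans a0 ab).
apply: le_trans (ler_powR Phi_ge1 pq).
apply: le0_ger_powR => //; rewrite (lt_le_trans ltr01 Phi_ge1) /=.
by apply: Phi_radial_le => //; apply/andP.
Qed.

Lemma Hint_Phi_nyz_ge (p q r : R) : p <= 0 -> p <= q -> 1 <= r ->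
  (((10 ^+ 5) `^ p / 10 * r `^ (7 + 6 * p))%:E <=
   Hint (fun z => Hint (fun y => (Phi (nyz y z) `^ q)%:E)))%E.
Proof.
move=> p_le0 pq r1; have r0 : 0 <= r := le_trans ler01 r1.
pose m := (10 ^+ 5 * r ^+ 6) `^ p.
have -> : (10 ^+ 5) `^ p / 10 * r `^ (7 + 6 * p) =
    r * r * r * r * (r * r * r * (1 / 10) * m).
  have r_neq0 : r != 0 by rewrite gt_eqF // (lt_le_trans ltr01 r1).
  rewrite /m powRM ?exprn_ge0 // powRD ?r_neq0 ?implybT // powRrM.
  by rewrite !powR_mulrn //; ring.
apply: (Hint_ge_box (l0 := r) (l1 := r) (l2 := r) (l3 := fun _ _ _ => r)) => //.
- by move=> z; apply: Hint_ge0 => y; rewrite lee_fin powR_ge0.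
- by rewrite !mulr_ge0 // powR_ge0.
move=> a b c d /andP[a1 a2] /andP[b1 b2] /andP[c1 c2] /andP[d1 d2].
set z := Quat a b c d.
have z_bounds : 4 * r ^+ 2 <= qnorm2 z <= 16 * r ^+ 2.
  by rewrite /qnorm2 /=; apply/andP; split; nra.
pose S (y0 y1 y2 : R) := y0 ^+ 2 + y1 ^+ 2 + y2 ^+ 2.
apply: (Hint_ge_box (l0 := 0) (l1 := 0) (l2 := 0)
  (l3 := fun y0 y1 y2 => Num.sqrt (qnorm2 z - S y0 y1 y2))) => //.
- by move=> y; rewrite lee_fin powR_ge0.
- exact: powR_ge0.
move=> y0 y1 y2 y3 /andP[y01 y02] /andP[y11 y12] /andP[y21 y22] y3_bounds.
have S_bounds : 0 <= S y0 y1 y2 <= qnorm2 z by apply/andP; split; rewrite /S; nra.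
rewrite lee_fin Phi_nyzE; apply: Phi_radial_powR_ge => //.
- by case/andP: z_bounds => z1 z2; rewrite z2 (le_trans _ z1) // mulr_ge0 // sqr_ge0.
- by apply: sqrt_sub_shift_bounds y3_bounds => //; case/andP: z_bounds.
Qed.

End Divergence.

Theorem lemma4p1 (R : realType) (eps : R) (heps : eps < 1 / 6) :
  (Hint (fun z : quat R => Hint (fun y : quat R =>
      ((Phi (nyz y z)) `^ (-1 - eps))%:E)) = +oo)%E.
Proof.
pose e := Num.max eps 0; pose p := -1 - e.
have e_ge0 : 0 <= e by rewrite le_max lexx orbT.
have e_ge : eps <= e by rewrite le_max lexx.
have e_lt : e < 1 / 6 by rewrite gt_max heps divr_gt0.
have p_le0 : p <= 0 by rewrite /p; lra.
have p_le : p <= -1 - eps by rewrite /p; lra.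
have growth_gt0 : 0 < 7 + 6 * p by rewrite /p; lra.
apply/eqyP => M _.
have K_gt0 : 0 < (10 ^+ 5) `^ p / 10 by rewrite divr_gt0 // powR_gt0.
have [r r1 M_le] := powR_unbounded M K_gt0 growth_gt0.
by apply: le_trans (Hint_Phi_nyz_ge p_le0 p_le r1); rewrite lee_fin.
Qed.
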